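(* Let $I$ be a resident-minimal instance and $(r_0,h_0)\in\mathrm{tent}(I)\setminus\mathrm{pend}(I)$. Then there is a (general) prescription $(P,X)$ for $I$ with $(r_0,h_0)\in\mathrm{tgs}(P,X)$ if and only if there is a resident-changeless and hospital-complete extension $I'$ of $I$ and a prescription $(P,Y)$ for $I'$ with $(r_0,h_0)\in\mathrm{tgs}(P,Y)$.
   Context: An instance $I$ consists of finite disjoint sets $R$ (residents) and $H$ (hospitals), a positive integer quota $q_h$ for each $h\in H$, for each $r\in R$ a preference list of $r$ (a sequence of distinct members of $H$, not necessarily all), and for each $h\in H$ a preference list of $h$ (a sequence of distinct members of $R$). Instances considered together share $R,H$ and quotas. A list is complete if it contains every member of the opposite side; an instance is hospital-complete if every hospital's list is complete. A match is a pair $(r,h)\in R\times H$. For a set $M$ of matches, $\mathrm{res}_h M=\{r:(r,h)\in M\}$, $\mathrm{res}\,M=\{r:(r,h)\in M\text{ for some }h\}$. $J$ is an extension of $I$ if every list of $J$ has the corresponding list of $I$ as a prefix; it is resident-changeless if every resident's list is the same in $I$ and $J$. An event is $(r,h)^+$ (proposal) or $(r,h)^-$ (rejection). For an event sequence $\sigma$, $\mathrm{prop}(\sigma)$, $\mathrm{rej}(\sigma)$ are the sets of matches proposed/rejected in $\sigma$, $\mathrm{tent}(\sigma)=\mathrm{prop}(\sigma)\setminus\mathrm{rej}(\sigma)$, and $\mathrm{pend}_I(\sigma)$ is the set of $(r,h)\in\mathrm{tent}(\sigma)$ with $r$ not on the list of $h$ in $I$. A match $(r,h)\in M$ is ousted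 from $M$ in $I$ if the list of $h$ in $I$ contains at least $q_h$ residents of $\mathrm{res}_h M$ and either $r$ is not on it or $r$ is preceded on it by at least $q_h$ residents of $\mathrm{res}_h M$. $I$-feasible sequences: the empty sequence is $I$-feasible; if $\sigma$ is $I$-feasible then $\sigma+(r,h)^+$ is $I$-feasible if $r\notin\mathrm{res}\,\mathrm{tent}(\sigma)$, $(r,h)\notin\mathrm{prop}(\sigma)$, $h$ is on the list of $r$ in $I$ and $(r,h')\in\mathrm{rej}(\sigma)$ for every $h'$ preceding $h$ on it; and $\sigma+(r,h)^-$ is $I$-feasible if $(r,h)$ is ousted from $\mathrm{prop}(\sigma)$ in $I$ and $(r,h)\notin\mathrm{rej}(\sigma)$. All maximal $I$-feasible sequences contain the same events; $\mathrm{prop}(I),\mathrm{rej}(I),\mathrm{tent}(I),\mathrm{pend}(I)$ denote $\mathrm{prop}(\sigma),\mathrm{rej}(\sigma),\mathrm{tent}(\sigma),\mathrm{pend}_I(\sigma)$ for any maximal $I$-feasible $\sigma$. $I$ is resident-minimal if $\mathrm{prop}(I)$ equals the set of matches $(r,h)$ with $h$ on the list of $r$ in $I$. For a resident-minimal instance $I$, a (general) prescription for $I$ is a pair $(P,X)$ of sets of matches such that: (P1) $P\cap\mathrm{prop}(I)=\emptyset$; (P2) for each $r\in R$ there is at most one $h$ with $(r,h)\in P$; (P3) $X\subseteq\mathrm{tent}(I)$; (P4) $\mathrm{res}\,P\cap\mathrm{res}\,\mathrm{tent}(I)\subseteq\mathrm{res}\,X$; (P5) for each $h$, $|\mathrm{res}_h(P\cup(\mathrm{tent}(I)\setminus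 X))|\le q_h$, with equality if $\mathrm{res}_h X\ne\emptyset$; (P6') for each $h$, every member of $\mathrm{res}_h(P\cup((\mathrm{tent}(I)\setminus\mathrm{pend}(I))\setminus X))$ precedes all members of $\mathrm{res}_h(X\setminus\mathrm{pend}(I))$ in the list of $h$ in $I$, and if $\mathrm{res}_h(X\setminus\mathrm{pend}(I))\ne\emptyset$ then $\mathrm{res}_h\,\mathrm{pend}(I)\subseteq\mathrm{res}_h X$. When $I$ is moreover hospital-complete (so $\mathrm{pend}(I)=\emptyset$), (P6') reads: (P6) every member of $\mathrm{res}_h(P\cup(\mathrm{tent}(I)\setminus X))$ precedes all members of $\mathrm{res}_h X$ in the list of $h$. The target set is $\mathrm{tgs}(P,X)=\{(r,h)\in X: r\notin\mathrm{res}\,P\}$. *)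

From Stdlib Require Import ClassicalEpsilon.
From mathcomp Require Import all_boot.

Set Implicit Arguments.
Unset Strict Implicit.
Unset Printing Implicit Defensive.

Definition pb (P : Prop) : bool :=
  if excluded_middle_informative P then true else false.

Section Defs.
Variables (R H : finType).

(* Residents and hospitals are the (disjoint) finite types
   R and H; quotas q : H -> nat are shared and passed separately. *)
Record instance := Instance {
  rlist : R -> seq H;
  hlist : H -> seq R;
  rlist_uniq : forall r, uniq (rlist r);
  hlist_uniq : forall h, uniq (hlist h) }.

Definition match_t := (R * H)%type.

Definition resh (h : H) (M : {set match_t}) : {set R} := [set r | (r, h) \in M].
Definition resS (M : {set match_t}) : {set R} := [set r | [exists h, (r, h) \in M]].

(* events: (true, m) is the proposal m^+, (false, m) the rejection m^- *)
Definition event := (bool * match_t)%type.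

Definition propS (s : seq event) : {set match_t} := [set m | (true, m) \in s].
Definition rejS (s : seq event) : {set match_t} := [set m | (false, m) \in s].
Definition tentS (s : seq event) : {set match_t} := propS s :\: rejS s.
Definition pendS (I : instance) (s : seq event) : {set match_t} :=
  [set m in tentS s | m.1 \notin hlist I m.2].

Variable q : H -> nat.

Definition ousted (I : instance) (M : {set match_t}) (m : match_t) : bool :=
  let: (r, h) := m in
  let L := hlist I h in
  let c := fun s : seq R => count (fun r' => (r', h) \in M) s in
  [&& m \in M, q h <= c L & (r \notin L) || (q h <= c (take (index r L) L))].

Definition step_ok (I : instance) (s : seq event) (e : event) : bool :=
  let: (b, (r, h)) := e in
  if b then
    [&& r \notin resS (tentS s), (r, h) \notin propS s, h \in rlist I r &
        all (fun h' => (r, h') \in rejS s) (take (index h (rlist I r)) (rlist I r))]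
  else ousted I (propS s) (r, h) && ((r, h) \notin rejS s).

Fixpoint feasible_from (I : instance) (pre s : seq event) : bool :=
  match s with
  | [::] => true
  | e :: s' => step_ok I pre e && feasible_from I (rcons pre e) s'
  end.

Definition feasible (I : instance) (s : seq event) : bool := feasible_from I [::] s.

Definition maximal (I : instance) (s : seq event) : bool :=
  feasible I s && [forall e : event, ~~ feasible I (rcons s e)].

(* prop(I), rej(I), tent(I), pend(I): computed from a maximal I-feasible
   sequence (all maximal sequences contain the same events). *)
Definition propI (I : instance) : {set match_t} :=
  [set m | pb (exists s, maximal I s /\ m \in propS s)].
Definition rejI (I : instance) : {set match_t} :=
  [set m | pb (exists s, maximal I s /\ m \in rejS s)].
Definition tentI (I : instance) : {set match_t} := propI I :\: rejI I.
Definition pendI (I : instance) : {set match_t} :=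
  [set m in tentI I | m.1 \notin hlist I m.2].

Definition resident_minimal (I : instance) : Prop :=
  forall r h, ((r, h) \in propI I) = (h \in rlist I r).

Definition hospital_complete (I : instance) : Prop :=
  forall h r, r \in hlist I h.

Definition extension (I J : instance) : Prop :=
  (forall r, prefix (rlist I r) (rlist J r)) /\
  (forall h, prefix (hlist I h) (hlist J h)).

Definition resident_changeless (I J : instance) : Prop :=
  forall r, rlist J r = rlist I r.

Definition precedes (L : seq R) (a b : R) : bool :=
  (a \in L) && (index a L < index b L).

Definition prescription (I : instance) (P X : {set match_t}) : Prop :=
  let T := tentI I in
  let D := pendI I in
  [/\ P :&: propI I = set0,
      (forall r h h', (r, h) \in P -> (r, h') \in P -> h = h'),
      X \subset T,
      resS P :&: resS T \subset resS X
    & [/\ (forall h, #|resh h (P :|: (T :\: X))| <= q h /\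
                (resh h X != set0 -> #|resh h (P :|: (T :\: X))| = q h))
        & (forall h,
      (forall a b, a \in resh h (P :|: ((T :\: D) :\: X)) ->
                   b \in resh h (X :\: D) -> precedes (hlist I h) a b) /\
      (resh h (X :\: D) != set0 -> resh h D \subset resh h X))]].

Definition tgs (P X : {set match_t}) : {set match_t} :=
  [set m in X | m.1 \notin resS P].

End Defs.

From Stdlib Require Import ClassicalEpsilon.
From mathcomp Require Import all_boot zify.

(* For a resident-minimal instance every acceptable pair is proposed, so
   tent(I) is the set of acceptable pairs not ousted from that fixed set.
   Extending hospital lists while keeping resident lists can only oust more
   pairs, and only pending ones, so tent(I') is tent(I) minus some pending
   pairs.  Backwards, a prescription (P,Y) for I' gives the prescription
   (P, Y ∪ (tent(I) ∖ tent(I'))) for I: a hospital losing such a pair is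
   full in I'.  Forwards, complete every list of I by appending first the
   residents of tent(I) ∖ X, then those of P, then everybody else: the pairs
   of tent(I) ∖ X stay tentative, since only such residents can precede
   them, and the targets come after P, so (P, X ∩ tent(I')) is a
   prescription for I'. *)

Set Implicit Arguments.
Unset Strict Implicit.
Unset Printing Implicit Defensive.

Section SeqLemmas.
Variable T : eqType.
Implicit Types (L s : seq T) (x : T) (p : pred T).

Lemma notin_take_index L x : x \notin take (index x L) L.
Proof. by apply/negP => /index_ltn; rewrite ltnn. Qed.

Lemma take_index_cat L s x :
  x \in L -> take (index x (L ++ s)) (L ++ s) = take (index x L) L.
Proof. by move=> xL; rewrite index_cat xL take_cat index_mem xL. Qed.

Lemma count_take_le p n s : count p (take n s) <= count p s.
Proof. by rewrite -[in X in _ <= X](cat_take_drop n s) count_cat leq_addr. Qed.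

Lemma count_take_index_cat p L s x :
  count p (take (index x L) L) <= count p (take (index x (L ++ s)) (L ++ s)).
Proof.
case xL: (x \in L); first by rewrite take_index_cat.
rewrite index_cat xL take_cat ltnNge leq_addr /= count_cat.
by rewrite memNindex ?xL // take_size leq_addr.
Qed.

Lemma count_first_n p s n : uniq s ->
  count (fun x => p x && (count p (take (index x s) s) < n)) s = minn n (count p s).
Proof.
elim: s n => [|y s IH] n /=; first by rewrite minn0.
case/andP => ys us; rewrite eqxx /=.
have -> : count (fun x => p x && (count p (take (index x (y :: s)) (y :: s)) < n)) s =
          count (fun x => p x && (count p (take (index x s) s) < n - p y)) s.
  apply: eq_in_count => x xs /=.
  have -> : (y == x) = false by apply/negbTE; apply: contraNneq ys => ->.
  by rewrite /= ltn_subRL.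
rewrite IH //; case: (p y) => /=; last by rewrite subn0 add0n.
by case: n => [|n] /=; rewrite ?min0n // subn1 add1n minnSS.
Qed.

End SeqLemmas.

Section FinSeqLemmas.
Variable T : finType.
Implicit Types (L s : seq T) (a b x : T) (p : pred T).

Lemma precedes_catl L s a b : precedes L a b -> precedes (L ++ s) a b.
Proof.
rewrite /precedes mem_cat => /andP[aL lt]; rewrite aL !index_cat aL.
by case: ifP => // _; apply: ltn_addr; rewrite index_mem.
Qed.

Lemma precedes_cat_mem L s a b : a \in L -> b \notin L -> precedes (L ++ s) a b.
Proof.
move=> aL bL; rewrite /precedes mem_cat aL !index_cat aL (negbTE bL).
by apply: ltn_addr; rewrite index_mem.
Qed.

Lemma precedes_catlK L s a b : b \in L -> precedes (L ++ s) a b -> precedes L a b.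
Proof.
move=> bL; rewrite /precedes mem_cat !index_cat bL => /andP[_].
have := index_mem b L; rewrite bL; case: (a \in L) => //=; lia.
Qed.

Lemma count_le_card p s (A : {set T}) :
  uniq s -> {in s, forall x, p x -> x \in A} -> count p s <= #|A|.
Proof.
move=> us sA; rewrite -size_filter -(card_uniqP (filter_uniq p us)).
by apply/subset_leq_card/subsetP => x; rewrite mem_filter => /andP[px /sA]; apply.
Qed.

End FinSeqLemmas.

Section LayeredCompletion.
Variable T : finType.
Implicit Types (L : seq T) (A B : {set T}).

Definition missing L A : seq T := [seq x <- enum T | (x \notin L) && (x \in A)].

Definition layered_completion L A B : seq T :=
  L ++ missing L A ++ missing L (B :\: A) ++ missing L (~: (A :|: B)).

Lemma mem_missing L A x : (x \in missing L A) = (x \notin L) && (x \in A).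
Proof. by rewrite mem_filter mem_enum andbT. Qed.

Lemma mem_layered_completion L A B x : x \in layered_completion L A B.
Proof.
rewrite !mem_cat !mem_missing !inE.
by case: (x \in L); case: (x \in A); case: (x \in B).
Qed.

Lemma layered_completion_uniq L A B : uniq L -> uniq (layered_completion L A B).
Proof.
have uf C : uniq (missing L C) by apply/filter_uniq/enum_uniq.
move=> uL; rewrite !cat_uniq uL !uf /= andbT.
apply/and3P; split; apply/hasPn => x; rewrite ?mem_cat !mem_missing !inE;
  by case: (x \in L); case: (x \in A); case: (x \in B).
Qed.

Lemma prefix_layered_completion L A B : prefix L (layered_completion L A B).
Proof. exact: prefix_prefix. Qed.

Lemma layered_completion_precedes L A B a b :
  (a \in L) || (a \in A :|: B) -> b \notin L -> b \notin A :|: B ->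
  precedes (layered_completion L A B) a b.
Proof.
move=> aLAB bL bAB; rewrite /layered_completion !catA.
apply: precedes_cat_mem; rewrite !mem_cat !mem_missing ?(negbTE bL) ?inE //.
  by move: aLAB; rewrite !inE; case: (a \in L); case: (a \in A); case: (a \in B).
by move: bAB; rewrite !inE; case: (b \in A); case: (b \in B).
Qed.

Lemma mem_take_index_layered L A B x y : x \in A ->
  y \in take (index x (layered_completion L A B)) (layered_completion L A B) ->
  (y \in L) || (y \in A).
Proof.
move=> xA; rewrite /layered_completion catA take_index_cat; last first.
  by rewrite mem_cat mem_missing xA andbT; case: (x \in L).
by move/mem_take; rewrite mem_cat mem_missing => /orP[->|/andP[_ ->]]; rewrite ?orbT.
Qed.

End LayeredCompletion.

Section Runs.
Variables (R H : finType) (q : H -> nat).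
Implicit Types (I J : instance R H) (s t : seq (event R H)) (M : {set match_t R H}).

Lemma mem_resh h M r : (r \in resh h M) = ((r, h) \in M).
Proof. by rewrite inE. Qed.

Lemma mem_pendI I m :
  (m \in pendI q I) = (m \in tentI q I) && (m.1 \notin hlist I m.2).
Proof. by rewrite [LHS]inE. Qed.

Lemma resSP M r : reflect (exists h, (r, h) \in M) (r \in resS M).
Proof. by rewrite inE; apply: existsP. Qed.

Lemma mem_tgs (P X : {set match_t R H}) m :
  (m \in tgs P X) = (m \in X) && (m.1 \notin resS P).
Proof. by rewrite [LHS]inE. Qed.

Lemma feasible_rcons I s e :
  feasible q I (rcons s e) = feasible q I s && step_ok q I s e.
Proof.
rewrite /feasible -[s in step_ok _ _ s _]cat0s; elim: s [::] => [|x s IH] pre /=.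
  by rewrite cats0 andbT.
by rewrite IH cat_rcons andbA.
Qed.

Lemma maximal_step_ok I t e : maximal q I t -> step_ok q I t e = false.
Proof.
by case/andP=> ft /forallP/(_ e); rewrite feasible_rcons ft => /negbTE.
Qed.

Lemma propS_rcons s b m :
  propS (rcons s (b, m)) = if b then m |: propS s else propS s.
Proof. by apply/setP => x; case: b; rewrite !inE mem_rcons in_cons. Qed.

Lemma rejS_rcons s b m :
  rejS (rcons s (b, m)) = if b then rejS s else m |: rejS s.
Proof. by apply/setP => x; case: b; rewrite !inE mem_rcons in_cons. Qed.

Lemma oustedE I M r h :
  ousted q I M (r, h) = ((r, h) \in M) &&
    (q h <= count (fun x => (x, h) \in M) (take (index r (hlist I h)) (hlist I h))).
Proof.
rewrite /ousted; set L := hlist I h; set c := count _.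
case rL: (r \in L) => /=.
  case: ((r, h) \in M) => //=; apply/andb_idl => /leq_trans; apply.
  exact: count_take_le.
by rewrite memNindex ?rL // take_size andbT.
Qed.

Lemma ousted_mem I M m : ousted q I M m -> m \in M.
Proof. by case: m => r h; rewrite oustedE => /andP[]. Qed.

Lemma ousted_mono I M M' m : M \subset M' -> ousted q I M m -> ousted q I M' m.
Proof.
case: m => r h /subsetP sMM'; rewrite !oustedE => /andP[/sMM' -> /leq_trans]; apply.
by apply: sub_count => x /sMM'.
Qed.

Definition run_consistent I s :=
  [/\ {in rejS s, forall m, ousted q I (propS s) m},
      (forall r h, (r, h) \in propS s -> h \in rlist I r) &
      (forall r h h', (r, h') \in propS s -> h \in rlist I r ->
         index h (rlist I r) < index h' (rlist I r) -> (r, h) \in rejS s)].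

Lemma feasible_run_consistent I s : feasible q I s -> run_consistent I s.
Proof.
elim/last_ind: s => [|s [[] [r h]] IH].
- by move=> _; split=> [m|r h|r h h']; rewrite inE.
- rewrite /run_consistent feasible_rcons propS_rcons rejS_rcons.
  case/andP=> /IH[rej acc ord] /and4P[_ _ hr /allP earlier]; split.
  + by move=> m /rej; apply/ousted_mono/subsetUr.
  + by move=> r' h' /setU1P[[-> ->] //|/acc].
  + move=> r' h1 h' /setU1P[[-> ->] h1r lt|]; last exact: ord.
    by apply: earlier; rewrite in_take.
- rewrite /run_consistent feasible_rcons propS_rcons rejS_rcons.
  case/andP=> /IH[rej acc ord] /andP[ou _]; split=> //.
  + by move=> m /setU1P[->|/rej].
  + by move=> r' h1 h' p1 h1r lt; rewrite in_setU1 (ord _ _ _ p1 h1r lt) orbT.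
Qed.

Lemma feasible_uniq I s : feasible q I s -> uniq s.
Proof.
elim/last_ind: s => [|s [b [r h]] IH] //.
rewrite feasible_rcons rcons_uniq => /andP[/IH -> ok]; rewrite andbT.
by case: b ok => [/and4P[_ + _ _]|/andP[_]]; rewrite inE.
Qed.

Lemma feasible_size I s : feasible q I s -> size s <= #|{: event R H}|.
Proof. by move/feasible_uniq/card_uniqP <-; apply: max_card. Qed.

Lemma exists_maximal I : exists t, maximal q I t.
Proof.
have : feasible q I [::] by [].
have [k] := ubnP (#|{: event R H}| - size (@nil (event R H))).
elim: k (@nil (event R H)) => // k IH s lt_k fs.
have [mx|/forallPn[e]] := boolP [forall e, ~~ feasible q I (rcons s e)].
  by exists s; apply/andP.
rewrite negbK => fe; apply: (IH _ _ fe).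
by have := feasible_size fe; rewrite size_rcons; lia.
Qed.

Lemma feasible_sub_maximal I J t s :
  (forall r, rlist J r = rlist I r) ->
  (forall M m, ousted q I M m -> ousted q J M m) ->
  maximal q J t -> feasible q I s ->
  propS s \subset propS t /\ rejS s \subset rejS t.
Proof.
move=> eqR oIJ mt; have [ft _] := andP mt.
have [t_rej t_acc t_ord] := feasible_run_consistent ft.
elim/last_ind: s => [|s [[] [r h]] IH].
- by move=> _; split; apply/subsetP => m; rewrite inE.
- rewrite feasible_rcons propS_rcons rejS_rcons.
  case/andP=> /IH[/subsetP sp /subsetP sr] /and4P[_ _ hr /allP earlier].
  split; apply/subsetP => // m /setU1P[->|/sp//]; apply/negPn/negP => nt.
  have /negbT := maximal_step_ok (true, (r, h)) mt.
  have all_rej :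
    all (fun h' => (r, h') \in rejS t) (take (index h (rlist I r)) (rlist I r)).
    by apply/allP => h' /earlier /sr.
  rewrite /= nt eqR hr all_rej /= andbT negbK inE => /existsP[h2].
  rewrite inE => /andP[nrej p2].
  have h2r : h2 \in rlist I r by rewrite -eqR; apply: t_acc p2.
  (* r holds a tentative proposal (r, h2) in t: compare h2 with h on r's list. *)
  case: (ltngtP (index h2 (rlist I r)) (index h (rlist I r))) => cmp.
  + by rewrite sr ?earlier ?in_take in nrej.
  + have := t_ord r h h2 p2; rewrite !eqR => /(_ hr cmp) /t_rej /ousted_mem.
    by rewrite (negbTE nt).
  + by rewrite -(index_inj h h2r hr cmp) p2 in nt.
- rewrite feasible_rcons propS_rcons rejS_rcons.
  case/andP=> /IH[sp /subsetP sr] /andP[ou _]; split=> //.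
  apply/subsetP => m /setU1P[->|/sr//]; apply/negPn/negP => nt.
  have /negbT := maximal_step_ok (false, (r, h)) mt.
  by rewrite /step_ok nt andbT (oIJ _ _ (ousted_mono sp ou)).
Qed.

Lemma pbP (P : Prop) : reflect P (pb P).
Proof. by rewrite /pb; case: excluded_middle_informative => p; constructor. Qed.

Lemma maximal_propI_rejI I t :
  maximal q I t -> propI q I = propS t /\ rejI q I = rejS t.
Proof.
move=> mt; have sub s : maximal q I s -> propS s \subset propS t /\ rejS s \subset rejS t.
  case/andP => fs _.
  exact: feasible_sub_maximal (fun _ => erefl) (fun _ _ => id) mt fs.
split; apply/setP => m; rewrite inE; apply/pbP/idP; try by exists t.
- by case=> s [/sub[/subsetP + _]]; apply.
- by case=> s [/sub[_ /subsetP]]; apply.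
Qed.

Lemma rejS_maximal I t : maximal q I t -> rejS t = [set m | ousted q I (propS t) m].
Proof.
move=> mt; have [ft _] := andP mt; have [t_rej _ _] := feasible_run_consistent ft.
apply/setP => [[r h]]; rewrite [in RHS]inE; apply/idP/idP => [/t_rej //|ou].
apply/negPn/negP => nr; have := maximal_step_ok (false, (r, h)) mt.
by rewrite /step_ok ou nr.
Qed.

Lemma tentIE I m :
  (m \in tentI q I) = (m \in propI q I) && ~~ ousted q I (propI q I) m.
Proof.
rewrite /tentI; have [t mt] := exists_maximal I; have [-> ->] := maximal_propI_rejI mt.
by rewrite (rejS_maximal mt) !inE andbC.
Qed.

Lemma propI_acceptable I r h : (r, h) \in propI q I -> h \in rlist I r.
Proof.
have [t mt] := exists_maximal I; have [-> _] := maximal_propI_rejI mt.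
by case/andP: mt => /feasible_run_consistent[_ t_acc _] _; apply: t_acc.
Qed.

Lemma tentI_hospital_uniq I r h h' :
  (r, h) \in tentI q I -> (r, h') \in tentI q I -> h = h'.
Proof.
have [t mt] := exists_maximal I; have [ft _] := andP mt.
have [_ t_acc t_ord] := feasible_run_consistent ft.
rewrite /tentI; have [-> ->] := maximal_propI_rejI mt.
rewrite !in_setD => /andP[nr p] /andP[nr' p'].
case: (ltngtP (index h (rlist I r)) (index h' (rlist I r))) => cmp.
- by rewrite (t_ord _ _ _ p' (t_acc _ _ p) cmp) in nr.
- by rewrite (t_ord _ _ _ p (t_acc _ _ p') cmp) in nr'.
- exact: index_inj (t_acc _ _ p) (t_acc _ _ p') cmp.
Qed.

Lemma pendI_complete I : hospital_complete I -> pendI q I = set0.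
Proof. by move=> cI; apply/setP => m; rewrite !inE cI andbF. Qed.

Section Extension.
Variables I J : instance R H.
Hypotheses (Imin : resident_minimal q I) (IJ : extension I J)
  (chIJ : resident_changeless I J).

Lemma ousted_extension M m : ousted q I M m -> ousted q J M m.
Proof.
case: m => r h; rewrite !oustedE => /andP[-> /leq_trans]; apply.
by case: IJ => _ /(_ h) /prefixP[s ->]; apply: count_take_index_cat.
Qed.

Lemma ousted_extension_mem M r h :
  r \in hlist I h -> ousted q J M (r, h) -> ousted q I M (r, h).
Proof.
by case: IJ => _ /(_ h) /prefixP[s eL] rL; rewrite !oustedE eL take_index_cat.
Qed.

Lemma resident_minimal_extension : resident_minimal q J.
Proof.
move=> r h; apply/idP/idP => [|hr]; first by move/propI_acceptable.
have [t mt] := exists_maximal J; have [s ms] := exists_maximal I.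
have [fs _] := andP ms.
have [/subsetP sub _] := feasible_sub_maximal chIJ ousted_extension mt fs.
have [-> _] := maximal_propI_rejI mt; apply: sub.
by have [<- _] := maximal_propI_rejI ms; rewrite Imin -chIJ.
Qed.

Lemma propI_extension : propI q J = propI q I.
Proof.
by apply/setP => [[r h]]; rewrite resident_minimal_extension Imin chIJ.
Qed.

Lemma tentI_extension_sub m : m \in tentI q J -> m \in tentI q I.
Proof.
rewrite !tentIE propI_extension => /andP[-> ]; apply: contra.
exact: ousted_extension.
Qed.

Lemma tentI_extension_mem r h :
  (r, h) \in tentI q I -> r \in hlist I h -> (r, h) \in tentI q J.
Proof.
rewrite !tentIE propI_extension => /andP[-> no] rL; apply: contra no.
exact: ousted_extension_mem.
Qed.

End Extension.

Section Backward.
Variables (I J : instance R H) (P Y : {set match_t R H}).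
Hypotheses (Imin : resident_minimal q I) (IJ : extension I J)
  (chIJ : resident_changeless I J) (Jc : hospital_complete J)
  (presc : prescription q J P Y).

Local Notation T := (tentI q I).
Local Notation T' := (tentI q J).
Local Notation X := (Y :|: (T :\: T')).

Let YT' : {subset Y <= T'}.
Proof. by case: presc => _ _ /subsetP. Qed.

Let T'T : {subset T' <= T}.
Proof. exact: tentI_extension_sub. Qed.

Let memX m : (m \in X) = (m \in Y) || (m \in T) && (m \notin T').
Proof. by rewrite in_setU in_setD andbC. Qed.

Lemma backward_quota h :
  #|resh h (P :|: (T :\: X))| <= q h /\
  (resh h X != set0 -> #|resh h (P :|: (T :\: X))| = q h).
Proof.
have -> : resh h (P :|: (T :\: X)) = resh h (P :|: (T' :\: Y)).
  apply/setP => r; rewrite !mem_resh !in_setU (in_setD T) (in_setD T') memX.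
  move: (@T'T (r, h)); case: ((r, h) \in T'); case: ((r, h) \in T);
    by rewrite ?orbF ?orbT ?andbT ?andbF // => /(_ isT).
case: presc => _ _ _ _ [/(_ h)[le full] _]; split=> // /set0Pn[e].
have [/eqP Y0|/full //] := boolP (resh h Y == set0).
have notY x : (x, h) \notin Y by rewrite -mem_resh Y0 inE.
rewrite mem_resh memX (negbTE (notY e)) /= => /andP[eT eT'].
(* (e, h) is ousted in J, so h is full in J: its first q h acceptable residents
   are tentative in J and, as resh h Y is empty, lie outside Y. *)
have eP : (e, h) \in propI q J.
  by rewrite (propI_extension Imin IJ chIJ); move: eT; rewrite tentIE => /andP[].
have : ousted q J (propI q J) (e, h) by move: eT'; rewrite tentIE eP negbK.
rewrite oustedE => /andP[_ /leq_trans/(_ (count_take_le _ _ _)) c_ge].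
apply/eqP; rewrite eqn_leq le /= -(minn_idPl c_ge) -count_first_n ?hlist_uniq //.
apply: count_le_card (hlist_uniq J h) _ => x _ /andP[px cx].
rewrite mem_resh in_setU in_setD notY /=; apply/orP; right.
by rewrite tentIE px oustedE px /= -ltnNge.
Qed.

Let orderJ h a b :
  (a, h) \in P :|: (T' :\: Y) -> (b, h) \in Y -> precedes (hlist J h) a b.
Proof.
case: presc => _ _ _ _ [_ /(_ h)[order _]] aPT bY.
by apply: order; rewrite mem_resh (pendI_complete Jc) setD0 // inE.
Qed.

Lemma backward_order h :
  (forall a b, a \in resh h (P :|: ((T :\: pendI q I) :\: X)) ->
     b \in resh h (X :\: pendI q I) -> precedes (hlist I h) a b) /\
  (resh h (X :\: pendI q I) != set0 -> resh h (pendI q I) \subset resh h X).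
Proof.
have [_ /(_ h) /prefixP[s eL]] := IJ.
have onlist b : b \in resh h (X :\: pendI q I) -> ((b, h) \in Y) && (b \in hlist I h).
  rewrite mem_resh in_setD memX mem_pendI negb_and negbK /= => /andP[nD].
  case/orP => [bY|/andP[bT]]; first by rewrite bY; move: nD; rewrite (T'T (YT' bY)).
  by move: nD; rewrite bT /= => /(tentI_extension_mem Imin IJ chIJ bT) ->.
split.
- move=> a b; rewrite mem_resh => aPTX /onlist/andP[bY bL].
  apply: (precedes_catlK (s := s)) bL _; rewrite -eL; apply: orderJ bY.
  move: aPTX; rewrite !in_setU => /orP[->//|]; rewrite in_setD memX negb_or.
  case/andP=> /andP[aY _]; rewrite in_setD mem_pendI => /andP[nD aT].
  rewrite in_setD aY; move: nD; rewrite aT negbK /= => aL.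
  by rewrite (tentI_extension_mem Imin IJ chIJ aT aL) orbT.
- case/set0Pn => b /onlist/andP[bY bL]; apply/subsetP => d.
  rewrite !mem_resh inE memX => /andP[dT dL]; rewrite dT /=.
  case dY: ((d, h) \in Y) => //=; apply/negP => dT'.
  have := @orderJ h d b; rewrite in_setU in_setD dY dT' orbT eL.
  by move=> /(_ isT bY) /(precedes_catlK bL) /andP[dL' _]; rewrite dL' in dL.
Qed.

Lemma prescription_restriction : prescription q I P X.
Proof.
case: presc => P1 P2 _ P4 _; split=> //.
- by rewrite -(propI_extension Imin IJ chIJ).
- by apply/subsetP => m; rewrite memX => /orP[/YT'/T'T|/andP[]].
- apply/subsetP => r /setIP[rP /resSP[h rhT]]; apply/resSP.
  have [rhT'|rhT'] := boolP ((r, h) \in T'); last by exists h; rewrite memX rhT rhT' orbT.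
  have /(subsetP P4)/resSP[h' rh'Y] : r \in resS P :&: resS T'.
    by rewrite inE rP; apply/resSP; exists h.
  by exists h'; rewrite memX rh'Y.
- by split; [exact: backward_quota | exact: backward_order].
Qed.

End Backward.

Section Forward.
Variables (I : instance R H) (P X : {set match_t R H}).
Hypotheses (Imin : resident_minimal q I) (presc : prescription q I P X).

Local Notation T := (tentI q I).
Local Notation D := (pendI q I).

Definition completion : instance R H :=
  @Instance R H (rlist I)
    (fun h => layered_completion (hlist I h) (resh h (T :\: X)) (resh h P))
    (@rlist_uniq _ _ I) (fun h => layered_completion_uniq _ _ (hlist_uniq I h)).

Local Notation I' := completion.
Local Notation T' := (tentI q I').

Lemma completion_extension : extension I I'.
Proof. by split=> [r|h]; [apply: prefix_refl | apply: prefix_layered_completion]. Qed.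

Lemma completion_changeless : resident_changeless I I'.
Proof. by []. Qed.

Lemma completion_complete : hospital_complete I'.
Proof. by move=> h r; apply: mem_layered_completion. Qed.

Let propI' : propI q I' = propI q I.
Proof. exact: propI_extension Imin completion_extension completion_changeless. Qed.

Lemma tentI_completion r h : (r, h) \in T -> (r, h) \notin X -> (r, h) \in T'.
Proof.
move=> rT rX; have [rL|rL] := boolP (r \in hlist I h).
  exact: (tentI_extension_mem Imin completion_extension completion_changeless rT rL).
case: presc => _ _ _ _ [/(_ h)[quota _] /(_ h)[_ pend_in_X]].
have XD0 : resh h (X :\: D) = set0.
  apply/eqP; apply: contraNT rX => /pend_in_X /subsetP/(_ r).
  by rewrite !mem_resh mem_pendI rT rL => /(_ isT).
set p := fun x => (x, h) \in propI q I.
have rP : (r, h) \in propI q I by move: rT; rewrite tentIE => /andP[].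
have count_lt : count p (hlist I h) < q h.
  by move: rT; rewrite tentIE rP oustedE rP memNindex // take_size -ltnNge.
rewrite tentIE propI' rP oustedE rP /= -ltnNge.
have rA : r \in resh h (T :\: X) by rewrite mem_resh in_setD rX rT.
(* r is in the first appended layer, so only residents of T :\: X precede it. *)
apply: (@leq_ltn_trans #|resh h (T :\: X) :\ r|).
  apply: count_le_card; first exact: take_uniq (hlist_uniq I' h).
  move=> y yt py; rewrite in_setD1 mem_resh.
  have -> /= : y != r by apply: contraTneq yt => ->; apply: notin_take_index.
  case/orP: (mem_take_index_layered rA yt) => [yL|]; last by rewrite mem_resh.
  have yT : (y, h) \in T.
    by rewrite tentIE py oustedE py -ltnNge (leq_ltn_trans (count_take_le _ _ _)).
  rewrite in_setD yT andbT; apply/negP => yX.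
  suff : y \in resh h (X :\: D) by rewrite XD0 inE.
  by rewrite mem_resh in_setD mem_pendI yT yL yX.
have := cardsD1 r (resh h (T :\: X)); rewrite rA add1n => cardA.
apply: leq_trans quota; rewrite -cardA; apply/subset_leq_card/subsetP => x.
by rewrite !mem_resh in_setU => ->; rewrite orbT.
Qed.

Let T'T : {subset T' <= T}.
Proof. exact: tentI_extension_sub Imin completion_extension completion_changeless. Qed.

Lemma tentI_completion_setD : T' :\: (X :&: T') = T :\: X.
Proof.
apply/setP => [[r h]]; rewrite (in_setD T') (in_setD T) in_setI.
have [rT'|rT'] := boolP ((r, h) \in T'); first by rewrite (T'T rT') !andbT.
rewrite !andbF; case rX: ((r, h) \in X); case rT: ((r, h) \in T) => //.
by move: rT'; rewrite (tentI_completion rT (negbT rX)).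
Qed.

Lemma forward_order h a b :
  (a, h) \in P :|: (T :\: X) -> (b, h) \in X :&: T' -> precedes (hlist I' h) a b.
Proof.
case: presc => P1 _ _ _ [_ /(_ h)[order pend_in_X]].
move=> aPTX /setIP[bX /T'T bT].
have [bL|bL] := boolP (b \in hlist I h); last first.
  apply: layered_completion_precedes => //.
    by apply/orP; right; rewrite in_setU !mem_resh orbC -in_setU.
  rewrite in_setU !mem_resh in_setD bX /=; apply/negP => bP.
  suff : (b, h) \in P :&: propI q I by rewrite P1 inE.
  by rewrite inE bP; move: bT; rewrite tentIE => /andP[].
have bXD : b \in resh h (X :\: D) by rewrite mem_resh in_setD mem_pendI bT bL bX.
have XD_ne : resh h (X :\: D) != set0 by apply/set0Pn; exists b.
apply: precedes_catl; apply: order _ _ _ bXD; rewrite mem_resh.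
move: aPTX; rewrite !in_setU => /orP[->//|]; rewrite in_setD => /andP[aX aT].
have aL : a \in hlist I h.
  apply: contraNT aX => aL.
  by have := subsetP (pend_in_X XD_ne) a; rewrite !mem_resh mem_pendI aT aL => /(_ isT).
by rewrite in_setD aX in_setD mem_pendI aT aL orbT.
Qed.

Lemma prescription_completion : prescription q I' P (X :&: T').
Proof.
case: presc => P1 P2 P3 P4 [P5 _]; split=> //.
- by rewrite propI'.
- exact: subsetIr.
- apply/subsetP => r /setIP[rP /resSP[h rhT']]; apply/resSP; exists h.
  have /(subsetP P4)/resSP[h' rh'X] : r \in resS P :&: resS T.
    by rewrite inE rP; apply/resSP; exists h; apply: T'T.
  by rewrite in_setI rhT' andbT (tentI_hospital_uniq (T'T rhT') (subsetP P3 _ rh'X)).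
- split=> h.
  + rewrite tentI_completion_setD; have [le full] := P5 h; split=> //.
    case/set0Pn => e; rewrite mem_resh => /setIP[eX _].
    by apply: full; apply/set0Pn; exists e; rewrite mem_resh.
  + rewrite (pendI_complete completion_complete) !setD0 tentI_completion_setD.
    split=> [a b|_]; first by rewrite !mem_resh; apply: forward_order.
    by apply/subsetP => r; rewrite mem_resh inE.
Qed.

End Forward.

End Runs.

Theorem theorem3 (R H : finType) (q : H -> nat) (q_pos : forall h, 0 < q h)
    (I : instance R H) (I_min : resident_minimal q I) (r0 : R) (h0 : H)
    (Hr0h0 : (r0, h0) \in tentI q I :\: pendI q I) :
  (exists P X : {set R * H}, prescription q I P X /\ (r0, h0) \in tgs P X) <->
  (exists (I' : instance R H) (P Y : {set R * H}),
      [/\ extension I I', resident_changeless I I', hospital_complete I'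
        & [/\ resident_minimal q I', prescription q I' P Y
            & (r0, h0) \in tgs P Y]]).
Proof.
split.
- case=> P [X [presc tg]]; set I' := completion q I P X.
  have IJ : extension I I' := completion_extension q I P X.
  have chIJ : resident_changeless I I' := completion_changeless q I P X.
  exists I', P, (X :&: tentI q I'); split=> //; first exact: completion_complete.
  split; [exact: resident_minimal_extension I_min IJ chIJ |
           exact: prescription_completion |].
  move: tg; rewrite !mem_tgs in_setI => /andP[-> ->]; rewrite andbT /=.
  case/setDP: Hr0h0 => r0T; rewrite mem_pendI r0T negbK => r0L.
  exact: (tentI_extension_mem I_min IJ chIJ r0T r0L).
- case=> I' [P [Y [IJ chIJ cI' [_ presc tg]]]].
  exists P, (Y :|: (tentI q I :\: tentI q I')).
  split; first exact: prescription_restriction.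
  by move: tg; rewrite !mem_tgs in_setU => /andP[-> ->].
Qed.
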